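(* The set of delay-insensitive gates $\{\textsf{MERGE},\textsf{FORK},\textsf{DUAL},\textsf{CROSS}\}$ can compute any Boolean function using a feed-forward planar circuit with dual-rail encoding.
   Context: Circuits transmit signals along wires with arbitrary (unbounded, unknown) delays; gates are delay-insensitive, i.e. they do not require simultaneity of inputs. The gates: \textsf{MERGE} has two input wires and one output wire and emits a signal on its output when a signal arrives on an input; at most one of its inputs is allowed to carry a signal. \textsf{FORK} has one input and two outputs and splits an incoming signal into two output copies. \textsf{DUAL} has two inputs and one output and produces an output signal once signals have arrived on both inputs. \textsf{CROSS} is a weak wire crossing of two wires, each signal passing straight through; simultaneous signals on both wires are prohibited. Dual-rail encoding represents each Boolean variable $\texttt{I}$ by two wires $\texttt{I}$ and $\neg\texttt{I}$: a signal is sent on wire $\texttt{I}$ if the value is true and on wire $\neg\texttt{I}$ if it is false (exactly one of the two carries a signal). A circuit is feed-forward if it contains no loops, and planar if its wires do not cross (other than through \textsf{CROSS} gates, which are themselves gates of the circuit). *)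

From mathcomp Require Import all_boot.
Set Implicit Arguments. Unset Strict Implicit. Unset Printing Implicit Defensive.

Inductive gate := MERGE | FORK | DUAL | CROSS.

(* A feed-forward planar circuit is described as a sequence of layers, drawn
   top to bottom in a strip.  The current cross-section of the strip is a row
   of wires (left to right).
   No other crossing of wires is possible, so the circuit is planar, and the
   order of layers makes it loop-free (feed-forward).

   Since the circuit is feed-forward and the delays are arbitrary and unknown,
   a wire carries at most one signal, and the behaviour of the circuit is
   captured by recording for each wire whether it (eventually) carries a
   signal.  The prohibited situations (signals on both inputs of a MERGE, or
   on both wires of a CROSS, which could be simultaneous under arbitrary
   delays) make the run fail (None). *)
Definition step (gi : gate * nat) (s : seq bool) : option (seq bool) :=
  let: (g, i) := gi in
  let a := nth false s i in
  let b := nth false s i.+1 in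
  match g with
  | FORK => if i < size s then Some (take i s ++ [:: a; a] ++ drop i.+1 s)
            else None
  | MERGE => if (i.+1 < size s) && ~~ (a && b)
             then Some (take i s ++ [:: a || b] ++ drop i.+2 s) else None
  | DUAL => if i.+1 < size s
            then Some (take i s ++ [:: a && b] ++ drop i.+2 s) else None
  | CROSS => if (i.+1 < size s) && ~~ (a && b)
             then Some (take i s ++ [:: b; a] ++ drop i.+2 s) else None
  end.

Definition circuit := seq (gate * nat).

Fixpoint run (c : circuit) (s : seq bool) : option (seq bool) :=
  match c with
  | [::] => Some s
  | gi :: c' => match step gi s with
                | Some s' => run c' s'
                | None => None
                end
  end.

(* Dual-rail encoding of an input vector: wires I1, ~I1, I2, ~I2, ..., In, ~In
   (left to right); wire I carries a signal iff the value is true. *)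
Definition dual_rail (n : nat) (x : n.-tuple bool) : seq bool :=
  flatten [seq [:: b; ~~ b] | b <- x].

Definition computes (n : nat) (f : n.-tuple bool -> bool) (c : circuit)
    (o1 o0 : nat) : Prop :=
  o1 != o0 /\
  forall x : n.-tuple bool, exists s, run c (dual_rail x) = Some s /\
    o1 < size s /\ o0 < size s /\
    nth false s o1 = f x /\ nth false s o0 = ~~ f x.

(* Decode the dual-rail inputs into a one-hot row of wires, one per assignment: starting
   from the pair (x1, ~x1), each further input b splits every wire h of the row into
   h AND ~b and h AND b, using FORK and DUAL.  Since at most one wire of the row ever
   carries a signal, wires of the row may be moved past each other with CROSS.  Finally
   the wires of the assignments where f holds are MERGEd into O and the others into ~O;
   these two output wires start out idle, as copies of DUAL(x1, ~x1), which never fires. *)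

From mathcomp Require Import all_boot.
Set Implicit Arguments. Unset Strict Implicit. Unset Printing Implicit Defensive.

Definition shift (c : circuit) (k : nat) : circuit := [seq (gi.1, gi.2 + k) | gi <- c].

Lemma run_cons gi c s : run (gi :: c) s = obind (run c) (step gi s).
Proof. by []. Qed.

Lemma run_cat c1 c2 s s1 : run c1 s = Some s1 -> run (c1 ++ c2) s = run c2 s1.
Proof.
elim: c1 s => [|gi c IHc] s; first by case=> ->.
by rewrite cat_cons !run_cons; case: (step gi s) => //= s'; apply: IHc.
Qed.

Lemma step_shift g i p s s' : step (g, i) s = Some s' ->
  step (g, i + size p) (p ++ s) = Some (p ++ s').
Proof.
have nth_shift k : nth false (p ++ s) (k + size p) = nth false s k.
  by rewrite nth_cat ltnNge leq_addl /= addnK.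
have take_shift : take (i + size p) (p ++ s) = p ++ take i s.
  by rewrite take_cat ltnNge leq_addl /= addnK.
have drop_shift k : drop (k + size p) (p ++ s) = drop k s.
  by rewrite drop_cat ltnNge leq_addl /= addnK.
have size_shift k : (k + size p <= size (p ++ s)) = (k <= size s).
  by rewrite size_cat addnC leq_add2l.
rewrite /step -!addSn !nth_shift !drop_shift take_shift !size_shift.
by case: g; case: ifP => // _ [<-]; rewrite -catA.
Qed.

Lemma run_shift c p s s' : run c s = Some s' ->
  run (shift c (size p)) (p ++ s) = Some (p ++ s').
Proof.
elim: c s => [|[g i] c IHc] s; first by case=> ->.
rewrite !run_cons; case E: (step (g, i) s) => [s1|] // run_c.
by rewrite (step_shift p E); apply: IHc.
Qed.

Definition rails (r : seq bool) : seq bool := flatten [seq [:: b; ~~ b] | b <- r].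

Definition idle_pair : circuit :=
  [:: (FORK, 0); (FORK, 2); (DUAL, 1); (CROSS, 0); (FORK, 0)].

Lemma run_idle_pair x s :
  run idle_pair (rails [:: x] ++ s) = Some ([:: false; false] ++ rails [:: x] ++ s).
Proof. by case: x => /=; rewrite drop0. Qed.

Fixpoint copy_rail (k : nat) : circuit :=
  if k is k'.+1 then copy_rail k' ++ [:: (FORK, 0); (FORK, 2); (CROSS, 1)] else [::].

Lemma run_copy_rail k b s :
  run (copy_rail k) (rails [:: b] ++ s) = Some (rails (nseq k.+1 b) ++ s).
Proof.
elim: k => [|k IHk] //.
by rewrite (run_cat _ IHk) /= drop0; case: (b).
Qed.

Fixpoint cross_over (k : nat) : circuit :=
  if k is k'.+1 then (CROSS, 0) :: shift (cross_over k') 1 else [::].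

Lemma run_cross_over u Q s : ~~ (u && has id Q) ->
  run (cross_over (size Q)) (u :: Q ++ s) = Some (Q ++ u :: s).
Proof.
elim: Q => [|q Q IHQ] //= no_clash.
have [/negbTE uq uQ] : ~~ (u && q) /\ ~~ (u && has id Q) by case: (u) no_clash => //; case: q.
by rewrite /step /= uq drop0; apply: (run_shift [:: q] (IHQ uQ)).
Qed.

Definition demux_cell : circuit := [:: (FORK, 0); (DUAL, 1); (CROSS, 1); (DUAL, 0)].

Lemma run_demux_cell u b s :
  run demux_cell (u :: rails [:: b] ++ s) = Some ([:: u && ~~ b; u && b] ++ s).
Proof. by case: u; case: b => /=; rewrite drop0. Qed.

Definition demux (H : seq bool) (b : bool) : seq bool :=
  flatten [seq [:: h && ~~ b; h && b] | h <- H].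

Lemma size_demux H b : size (demux H b) = (size H).*2.
Proof. by elim: H => //= h H IHH; rewrite IHH doubleS. Qed.

Lemma count_demux H b : count id (demux H b) = count id H.
Proof. by elim: H => //= h H IHH; rewrite IHH; case: h; case: (b). Qed.

Fixpoint demux_loop (i k : nat) : circuit :=
  if i is i'.+1 then cross_over (i' + k) ++ shift demux_cell (i' + k) ++ demux_loop i' k.+2
  else [::].

Lemma run_demux_loop b H Q s : count id (H ++ Q) <= 1 ->
  run (demux_loop (size H) (size Q)) (H ++ Q ++ rails (nseq (size H) b) ++ s)
  = Some (Q ++ demux H b ++ s).
Proof.
elim: H Q => [|h H IHH] Q one_hot; first by [].
set rest := rails (nseq (size H) b) ++ s.
have no_clash : ~~ (h && has id (H ++ Q)).
  by move: one_hot; rewrite has_count /=; case: h => //; rewrite add1n ltnS leqn0 => /eqP ->.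
have cross := run_cross_over (rails [:: b] ++ rest) no_clash.
have cell := run_shift (H ++ Q) (run_demux_cell h b rest).
rewrite size_cat in cross cell.
have -> : (h :: H) ++ Q ++ rails (nseq (size H).+1 b) ++ s
  = h :: (H ++ Q) ++ rails [:: b] ++ rest by rewrite /rest /= -!catA.
rewrite [demux_loop _ _]/= (run_cat _ cross) (run_cat _ cell).
have -> : (H ++ Q) ++ [:: h && ~~ b; h && b] ++ rest
  = H ++ (Q ++ [:: h && ~~ b; h && b]) ++ rails (nseq (size H) b) ++ s.
  by rewrite /rest -!catA.
have -> : (size Q).+2 = size (Q ++ [:: h && ~~ b; h && b]) by rewrite size_cat addn2.
rewrite IHH -?catA //.
have pair_count : count id [:: h && ~~ b; h && b] = h by case: (h); case: (b).
by rewrite catA count_cat pair_count addnC.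
Qed.

Definition demux_stage (m : nat) : circuit := shift (copy_rail m.-1) m ++ demux_loop m 0.

Lemma run_demux_stage b H s : 0 < size H -> count id H <= 1 ->
  run (demux_stage (size H)) (H ++ rails [:: b] ++ s) = Some (demux H b ++ s).
Proof.
move=> H_gt0 one_hot.
have copies := run_shift H (run_copy_rail (size H).-1 b s).
rewrite prednK // in copies.
rewrite (run_cat _ copies).
by have := @run_demux_loop b H [::] s; rewrite cats0 => ->.
Qed.

Fixpoint decoder (m k : nat) : circuit :=
  if k is k'.+1 then demux_stage m ++ decoder m.*2 k' else [::].

Lemma run_decoder r H s : 0 < size H -> count id H <= 1 ->
  run (decoder (size H) (size r)) (H ++ rails r ++ s) = Some (foldl demux H r ++ s).
Proof.
elim: r H => [|b r IHr] H H_gt0 one_hot //.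
have -> : H ++ rails (b :: r) ++ s = H ++ rails [:: b] ++ rails r ++ s by [].
rewrite [decoder _ _]/= (run_cat _ (run_demux_stage b _ H_gt0 one_hot)) -(size_demux H b).
by apply: IHr; rewrite ?size_demux ?double_gt0 ?count_demux.
Qed.

Definition extend (E : seq (seq bool)) : seq (seq bool) :=
  [seq rcons e c | e <- E, c <- [:: false; true]].

Lemma demux_indicator E y b :
  demux [seq e == y | e <- E] b = [seq e == rcons y b | e <- extend E].
Proof.
elim: E => //= e E IHE.
move: IHE; rewrite /demux /= => ->; rewrite !eqseq_rcons.
by case: b; rewrite ?andbT ?andbF.
Qed.

Lemma foldl_demux_indicator E y r :
  foldl demux [seq e == y | e <- E] r = [seq e == y ++ r | e <- iter (size r) extend E].
Proof.
elim: r E y => [|b r IHr] E y /=; first by rewrite cats0.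
by rewrite demux_indicator IHr -iterSr cat_rcons.
Qed.

Definition collect (labels : seq bool) : circuit :=
  flatten [seq if l then [:: (CROSS, 1); (MERGE, 0)] else [:: (MERGE, 1)] | l <- labels].

Lemma run_collect (g : seq bool -> bool) E x o no :
  count id [:: o, no & [seq e == x | e <- E]] <= 1 ->
  run (collect [seq g e | e <- E]) [:: o, no & [seq e == x | e <- E]]
  = Some [:: o || g x && (x \in E); no || ~~ g x && (x \in E)].
Proof.
elim: E o no => [|e E IHE] o no one_hot; first by rewrite /= in_nil !andbF !orbF.
set rest := [seq e == x | e <- E]; set d := e == x.
have merge_head : run (if g e then [:: (CROSS, 1); (MERGE, 0)] else [:: (MERGE, 1)])
    [:: o, no, d & rest] = Some [:: o || g e && d, no || ~~ g e && d & rest].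
  by move: one_hot; rewrite /= -/d; case: (g e); case: o; case: no; case: d; rewrite /= ?drop0.
rewrite /collect /= -/(collect _) (run_cat _ merge_head) IHE; last first.
  by move: one_hot; rewrite /= -/d; case: (g e); case: (o); case: (no); case: (d).
rewrite in_cons /d eq_sym.
by case: eqP => [-> | _]; case: (g _); rewrite /= ?andbF ?orbF ?orbT.
Qed.

Lemma count_foldl_demux H r : count id (foldl demux H r) = count id H.
Proof. by elim: r H => //= b r IHr H; rewrite IHr count_demux. Qed.

Definition assignments (k : nat) : seq (seq bool) := iter k extend [:: [:: true]; [:: false]].

Lemma foldl_demux_rails x r :
  foldl demux (rails [:: x]) r = [seq e == x :: r | e <- assignments (size r)].
Proof.
have -> : rails [:: x] = [seq e == [:: x] | e <- [:: [:: true]; [:: false]]] by case: x.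
exact: foldl_demux_indicator.
Qed.

Lemma count_assignments_indicator x r :
  count id [seq e == x :: r | e <- assignments (size r)] = 1.
Proof. by rewrite -foldl_demux_rails count_foldl_demux; case: x. Qed.

Lemma mem_assignments x r : x :: r \in assignments (size r).
Proof.
have : has id [seq e == x :: r | e <- assignments (size r)].
  by rewrite has_count count_assignments_indicator.
by case/hasP => _ /mapP [e e_in ->] /eqP <-.
Qed.

Definition minterm_circuit (g : seq bool -> bool) (k : nat) : circuit :=
  idle_pair ++ shift (decoder 2 k) 2 ++ collect [seq g e | e <- assignments k].

Lemma run_minterm_circuit (g : seq bool -> bool) x r :
  run (minterm_circuit g (size r)) (rails (x :: r)) = Some [:: g (x :: r); ~~ g (x :: r)].
Proof.
have rail_one_hot : count id (rails [:: x]) <= 1 by case: x.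
have decoded := @run_decoder r (rails [:: x]) [::] erefl rail_one_hot.
rewrite !cats0 foldl_demux_rails in decoded.
have -> : rails (x :: r) = rails [:: x] ++ rails r by [].
rewrite (run_cat _ (run_idle_pair x _)) (run_cat _ (run_shift [:: false; false] decoded)).
rewrite run_collect; last by rewrite /= count_assignments_indicator.
by rewrite mem_assignments !andbT.
Qed.

Theorem mainTheorem9 (n : nat) (f : n.-tuple bool -> bool) :
  0 < n -> exists (c : circuit) (o1 o0 : nat), computes f c o1 o0.
Proof.
case: n f => [//|n] f _.
pose g (e : seq bool) := f (insubd (nseq_tuple n.+1 false) e).
exists (minterm_circuit g n), 0, 1; split => // t.
have g_t : g t = f t by rewrite /g valKd.
change (dual_rail t) with (rails t); rewrite -g_t.
case: (tval t) (size_tuple t) => [|x r] // [<-].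
by rewrite run_minterm_circuit; eexists.
Qed.
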